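(* For all positive integers $n$ and $m$, the Pancake graphs satisfy $\chi(P_{n+m})\leqslant\chi(P_n)+\chi(P_m)$.
   Context: For $n\geqslant 1$, the Pancake graph $P_n$ is the Cayley graph on the symmetric group $\mathrm{Sym}_n$, with permutations written in one-line notation $\pi=[\pi_1\pi_2\ldots\pi_n]$. Its generating set consists of the prefix-reversals $r_i$, $2\leqslant i\leqslant n$. Multiplying $\pi$ on the right by $r_i$ reverses the first $i$ entries: $\pi r_i=[\pi_i\pi_{i-1}\ldots\pi_1\pi_{i+1}\ldots\pi_n]$. Two vertices $\pi,\sigma$ are adjacent iff $\sigma=\pi r_i$ for some $2\leqslant i\leqslant n$. In particular $P_1$ is a single vertex. $\chi$ denotes the chromatic number. *)

From mathcomp Require Import all_boot all_fingroup.
Set Implicit Arguments. Unset Strict Implicit. Unset Printing Implicit Defensive.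

Definition colorable (T : finType) (e : rel T) (k : nat) : bool :=
  [exists f : {ffun T -> 'I_k}, [forall x, forall y, e x y ==> (f x != f y)]].

Lemma colorable_exists (T : finType) (e : rel T) (irr : irreflexive e) :
  exists k, colorable e k.
Proof.
exists #|T|; apply/existsP; exists [ffun x => enum_rank x].
apply/forallP => x; apply/forallP => y; apply/implyP => exy.
rewrite !ffunE; apply/negP => /eqP /enum_rank_inj Exy.
by move: exy; rewrite Exy irr.
Qed.

Definition chi (T : finType) (e : rel T) (irr : irreflexive e) : nat :=
  ex_minn (colorable_exists irr).

(* Positions are 0-indexed: pi = [pi 0 ... pi (n-1)] in one-line notation.
   The prefix reversal r_i (2 <= i <= n) maps position j to i-1-j if j < i
   and fixes j otherwise; (pi r_i) j = pi (r_i j). *)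

Lemma prefrev_lt (n i : nat) (j : 'I_n) :
  (if j < minn i n then (minn i n).-1 - j else j) < n.
Proof.
case: ifP => [H|_]; last exact: ltn_ord.
have Hm : minn i n <= n by rewrite geq_minr.
have Hp : 0 < minn i n by apply: leq_ltn_trans H.
by apply: leq_ltn_trans (leq_subr _ _) _; rewrite prednK.
Qed.

(* r_i as a map on positions (for 2 <= i <= n, minn i n = i) *)
Definition prefrev (n i : nat) (j : 'I_n) : 'I_n := Ordinal (prefrev_lt i j).

Definition pancake_adj (n : nat) : rel {perm 'I_n} :=
  fun pi sigma =>
    [exists i : 'I_n.+1, (2 <= i) && [forall j, sigma j == pi (prefrev i j)]].

Lemma pancake_irr (n : nat) : irreflexive (@pancake_adj n).
Proof.
move=> pi; apply/negbTE/negP => /existsP [i /andP [Hi /forallP H]].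
have Hin : i <= n by rewrite -ltnS ltn_ord.
have Hn : 0 < n by apply: leq_trans Hin; apply: leq_trans Hi.
have := H (Ordinal Hn); move/eqP/perm_inj/(congr1 val) => /=.
have -> : minn i n = i by apply/minn_idPl.
rewrite (leq_trans _ Hi) // subn0.
by case: (nat_of_ord i) Hi => [|[|k]].
Qed.

Definition chi_pancake (n : nat) : nat := chi (@pancake_irr n).

From mathcomp Require Import all_boot all_fingroup.
From mathcomp Require Import zify.

Set Implicit Arguments. Unset Strict Implicit. Unset Printing Implicit Defensive.

(* Put N = n + m and split the values {0, ..., N-1} into the low window [0, n)
   and the high window [n, N).  For a permutation p of 'I_N and a window
   [a, a + k), the pattern of p is the permutation of 'I_k read off the one-line
   notation of p by keeping only the values in the window and subtracting a.
   The prefix reversal r_i acts on the one-line notation by reversing its first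
   i entries; hence on the pattern it acts as r_c, where c is the number of
   window values among the first i entries, and for c >= 2 the patterns of p and
   p r_i are adjacent in P_k.  We colour p with a proper colouring of P_n applied
   to its low pattern if its first entry is low, and otherwise with a proper
   colouring of P_m, on a disjoint palette, applied to its high pattern.  If p
   and q = p r_i use the same palette, then p(0) and q(0) = p(i-1) lie in the
   same window, so c >= 2 and the two patterns have different colours.
   The file develops prefix reversal on sequences, one-line notation, window
   patterns and their adjacency, then this split colouring; the theorem
   follows by applying it to optimal colourings of P_n and P_m. *)

Definition seq_prefrev (T : Type) (i : nat) (s : seq T) : seq T :=
  rev (take i s) ++ drop i s.

Lemma nth_seq_prefrev (T : Type) (x0 : T) (s : seq T) (i x : nat) :
  i <= size s -> x < size s ->
  nth x0 (seq_prefrev i s) x =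
  nth x0 s (if x < minn i (size s) then (minn i (size s)).-1 - x else x).
Proof.
move=> hi hx; have -> : minn i (size s) = i by apply/minn_idPl.
rewrite nth_cat size_rev size_takel //.
case: ifP => xi; last by rewrite nth_drop; congr nth; lia.
by rewrite nth_rev ?size_takel // nth_take; [congr nth | ]; lia.
Qed.

Lemma map_seq_prefrev (T U : Type) (f : T -> U) (i : nat) (s : seq T) :
  map f (seq_prefrev i s) = seq_prefrev i (map f s).
Proof. by rewrite /seq_prefrev map_cat map_rev map_take map_drop. Qed.

Lemma filter_seq_prefrev (T : Type) (P : pred T) (i : nat) (s : seq T) :
  filter P (seq_prefrev i s) = seq_prefrev (count P (take i s)) (filter P s).
Proof.
have split_s : filter P s = filter P (take i s) ++ filter P (drop i s).
  by rewrite -filter_cat cat_take_drop.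
rewrite /seq_prefrev filter_cat filter_rev split_s -size_filter.
by rewrite take_size_cat // drop_size_cat.
Qed.

Lemma two_le_count_take (T : Type) (x0 : T) (P : pred T) (s : seq T) (i : nat) :
  2 <= i <= size s -> P (nth x0 s 0) -> P (nth x0 s i.-1) ->
  2 <= count P (take i s).
Proof.
case: i => [|[|j]] //= hj h0 hj1.
rewrite (take_nth x0) // -cats1 count_cat /= hj1.
by case: s hj h0 {hj1} => [|x s] //= _ ->; rewrite addnC.
Qed.

Section OneLine.
Variable N : nat.

Definition oneline (p : {perm 'I_N}) : seq nat := [seq val (p j) | j <- enum 'I_N].

Lemma size_oneline p : size (oneline p) = N.
Proof. by rewrite size_map size_enum_ord. Qed.

Lemma nth_oneline p (j : 'I_N) : nth 0 (oneline p) j = p j.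
Proof. by rewrite (nth_map j) ?nth_ord_enum // size_enum_ord. Qed.

Lemma mem_oneline p v : (v \in oneline p) = (v < N).
Proof.
apply/mapP/idP => [[j _ ->] | hv]; first exact: ltn_ord.
by exists ((p^-1)%g (Ordinal hv)); rewrite ?mem_enum ?permKV.
Qed.

Lemma uniq_oneline p : uniq (oneline p).
Proof. by rewrite map_inj_uniq ?enum_uniq // => x y /val_inj /perm_inj. Qed.

Lemma oneline_prefrev (p q : {perm 'I_N}) (i : nat) :
  i <= N -> (forall j, q j = p (prefrev i j)) ->
  oneline q = seq_prefrev i (oneline p).
Proof.
move=> hi hq; apply: (@eq_from_nth _ 0).
  by rewrite /seq_prefrev size_cat size_rev size_drop size_takel size_oneline
    ?subnKC // size_oneline.
move=> x; rewrite size_oneline => hx.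
rewrite nth_seq_prefrev size_oneline //.
by rewrite -[x]/(val (Ordinal hx)) nth_oneline hq -nth_oneline.
Qed.

Lemma head_oneline_prefrev (p q : {perm 'I_N}) (i : nat) :
  2 <= i <= N -> (forall j, q j = p (prefrev i j)) ->
  nth 0 (oneline q) 0 = nth 0 (oneline p) i.-1.
Proof.
move=> /andP [h2 hi] hq; rewrite (oneline_prefrev hi hq).
rewrite nth_seq_prefrev size_oneline //; last by lia.
have -> : minn i N = i by apply/minn_idPl.
by case: i h2 {hi hq} => [|[|i]].
Qed.

Lemma nth_oneline_lt p x : x < N -> nth 0 (oneline p) x < N.
Proof. by move=> hx; rewrite -(mem_oneline p) mem_nth // size_oneline. Qed.

Section Window.
Variables a k : nat.
Hypothesis window_le : a + k <= N.

Definition in_window (v : nat) : bool := (a <= v) && (v < a + k).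

Definition window_word (p : {perm 'I_N}) : seq nat :=
  [seq v - a | v <- filter in_window (oneline p)].

(* Every value of the window occurs exactly once, so the word is a
   rearrangement of 0, ..., k-1. *)
Lemma window_word_perm p : perm_eq (window_word p) (iota 0 k).
Proof.
apply: uniq_perm; last 1 first.
- move=> x; rewrite mem_iota add0n; apply/mapP/idP.
    by case=> v; rewrite mem_filter /in_window => /andP [/andP [h1 h2] _] ->; lia.
  move=> hx; exists (x + a); last by rewrite addnK.
  by rewrite mem_filter mem_oneline /in_window; apply/andP; split; lia.
- rewrite map_inj_in_uniq ?filter_uniq ?uniq_oneline // => x y.
  by rewrite !mem_filter /in_window => /andP [/andP [hx _] _] /andP [/andP [hy _] _]; lia.
- exact: iota_uniq.
Qed.

Lemma size_window_word p : size (window_word p) = k.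
Proof. by rewrite (perm_size (window_word_perm p)) size_iota. Qed.

Lemma nth_window_word_lt p x : x < k -> nth 0 (window_word p) x < k.
Proof.
move=> hx; have : nth 0 (window_word p) x \in iota 0 k.
  by rewrite -(perm_mem (window_word_perm p)) mem_nth // size_window_word.
by rewrite mem_iota.
Qed.

Definition pattern_fun p (x : 'I_k) : 'I_k :=
  Ordinal (nth_window_word_lt p (ltn_ord x)).

Lemma pattern_fun_inj p : injective (pattern_fun p).
Proof.
move=> x y /(congr1 val) /= /eqP.
rewrite nth_uniq ?size_window_word ?(perm_uniq (window_word_perm p)) ?iota_uniq //.
by move/eqP/val_inj.
Qed.

Definition pattern p : {perm 'I_k} := perm (@pattern_fun_inj p).

Lemma pattern_val p x : val (pattern p x) = nth 0 (window_word p) x.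
Proof. by rewrite permE. Qed.

Lemma window_word_prefrev (p q : {perm 'I_N}) (i : nat) :
  i <= N -> (forall j, q j = p (prefrev i j)) ->
  window_word q = seq_prefrev (count in_window (take i (oneline p))) (window_word p).
Proof.
by move=> hi hq; rewrite /window_word (oneline_prefrev hi hq) filter_seq_prefrev
  map_seq_prefrev.
Qed.

Lemma pattern_adj (p q : {perm 'I_N}) (i : nat) :
  i <= N -> (forall j, q j = p (prefrev i j)) ->
  2 <= count in_window (take i (oneline p)) -> pancake_adj (pattern p) (pattern q).
Proof.
move=> hi hq h2; set c := count in_window (take i (oneline p)).
have hck : c < k.+1.
  rewrite ltnS -(size_window_word p) size_map size_filter.
  by rewrite -[in X in _ <= X](cat_take_drop i (oneline p)) count_cat leq_addr.
apply/existsP; exists (Ordinal hck); rewrite /= h2 /=.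
apply/forallP => x; apply/eqP/val_inj.
rewrite !pattern_val (window_word_prefrev hi hq) nth_seq_prefrev size_window_word //.
Qed.

End Window.
End OneLine.

Section SplitColouring.
Variables n m cn cm : nat.
Variable col_lo : {perm 'I_n} -> 'I_cn.
Variable col_hi : {perm 'I_m} -> 'I_cm.
Hypothesis col_lo_proper : forall p q, pancake_adj p q -> col_lo p != col_lo q.
Hypothesis col_hi_proper : forall p q, pancake_adj p q -> col_hi p != col_hi q.

Lemma low_window_le : 0 + n <= n + m. Proof. by rewrite add0n leq_addr. Qed.
Lemma high_window_le : n + m <= n + m. Proof. by []. Qed.

Definition split_colour (p : {perm 'I_(n + m)}) : 'I_(cn + cm) :=
  if nth 0 (oneline p) 0 < n
  then lshift cm (col_lo (pattern low_window_le p))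
  else rshift cn (col_hi (pattern high_window_le p)).

(* Adjacent permutations with first entries in the same window have adjacent
   patterns in that window; otherwise they use disjoint palettes. *)
Lemma split_colour_proper p q : pancake_adj p q -> split_colour p != split_colour q.
Proof.
move=> /existsP [i /andP [hi2 /forallP hq]].
have {}hq : forall j, q j = p (prefrev i j) by move=> j; apply/eqP.
have hiN : i <= n + m by rewrite -ltnS ltn_ord.
have hi : 2 <= i <= n + m by rewrite hi2 hiN.
have hsize : 2 <= i <= size (oneline p) by rewrite size_oneline.
have hfirst : nth 0 (oneline p) 0 < n + m by apply: nth_oneline_lt; lia.
have hlast : nth 0 (oneline p) i.-1 < n + m by apply: nth_oneline_lt; lia.
rewrite /split_colour (head_oneline_prefrev hi hq).
case: ifP => hp0; case: ifP => hpi; rewrite ?eq_shift //.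
- apply/col_lo_proper/(pattern_adj low_window_le hiN hq).
  by apply: (two_le_count_take (x0 := 0) hsize); rewrite /in_window add0n ?hp0 ?hpi.
- apply/col_hi_proper/(pattern_adj high_window_le hiN hq).
  apply: (two_le_count_take (x0 := 0) hsize);
    by rewrite /in_window ?hfirst ?hlast leqNgt ?hp0 ?hpi.
Qed.

End SplitColouring.

Lemma colorableP (T : finType) (e : rel T) (k : nat) :
  reflect (exists f : T -> 'I_k, forall x y, e x y -> f x != f y) (colorable e k).
Proof.
apply: (iffP existsP) => [[f /forallP hf] | [f hf]].
  by exists f => x y; move: (hf x) => /forallP /(_ y) /implyP.
exists [ffun x => f x]; apply/forallP => x; apply/forallP => y.
by apply/implyP; rewrite !ffunE; apply: hf.
Qed.

Lemma chi_le (T : finType) (e : rel T) (irr : irreflexive e) (k : nat) :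
  colorable e k -> chi irr <= k.
Proof. by rewrite /chi; case: ex_minnP => c _; apply. Qed.

Lemma colorable_chi (T : finType) (e : rel T) (irr : irreflexive e) :
  colorable e (chi irr).
Proof. by rewrite /chi; case: ex_minnP. Qed.

Theorem theorem2 (n m : nat) (hn : 0 < n) (hm : 0 < m) :
  chi_pancake (n + m) <= chi_pancake n + chi_pancake m.
Proof.
have /colorableP [col_lo col_lo_proper] := colorable_chi (@pancake_irr n).
have /colorableP [col_hi col_hi_proper] := colorable_chi (@pancake_irr m).
apply/chi_le/colorableP; exists (split_colour col_lo col_hi).
exact: split_colour_proper.
Qed.
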